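(* Let $D$ be the standard contact $(2n-1)$-ball and $p_\pm\in\partial D$ its poles. Let $\Delta=D^{2n-2}\times[0,a]$ ($a>0$) be the Weinstein cylinder over the unit ball $D^{2n-2}\subset\mathbb{R}^{2n-2}$, with contact structure $\ker(\lambda_{st}+dz)$, and let $\partial_+\Delta=D^{2n-2}\times a$. Then for every $\epsilon>0$ there exists a contact embedding $h:\Delta\to D$ such that $h(\partial_+\Delta)\subset\partial D$, the set $\partial D\setminus h(\partial_+\Delta)$ is contained in the $\epsilon$-neighborhood of the pole $p_-$, and $D\setminus h(\Delta)$ is contained in the $\epsilon$-neighborhood of $\partial D$.
   Context: The standard contact $(2n-1)$-ball is the hemisphere $D=S^{2n-1}\cap\{y_n\ge0\}\subset\mathbb{R}^{2n}$ with contact structure $\ker\big(\sum_{j=1}^n(x_jdy_j-y_jdx_j)|_{S^{2n-1}}\big)$; its boundary is $S^{2n-1}\cap\{y_n=0\}$ and its poles are $p_\pm=\{x_n=\pm1$, all other coordinates $0\}$. Distances are taken with respect to the metric induced from $\mathbb{R}^{2n}$. On $\mathbb{R}^{2n-2}$, $\lambda_{st}=\sum_{j=1}^{n-1}(x_jdy_j-y_jdx_j)$, and $z$ is the coordinate on $[0,a]$. *)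

From HB Require Import structures.
From mathcomp Require Import all_boot all_order all_algebra.
From mathcomp Require Import all_classical all_reals all_analysis.
Unset Printing Implicit Defensive.
Import Order.TTheory GRing.Theory Num.Theory.
Import numFieldNormedType.Exports.
Local Open Scope classical_set_scope.
Local Open Scope ring_scope.

Fixpoint Ck {R : realType} {V W : normedModType R} (k : nat) (U : set V)
  (f : V -> W) : Prop :=
  match k with
  | 0 => forall x, U x -> {for x, continuous f}
  | k'.+1 => (forall x, U x -> differentiable f x) /\
             (forall v : V, Ck k' U (fun y => 'D_v f y))
  end.

Definition smooth_on {R : realType} {V W : normedModType R} (U : set V)
  (f : V -> W) : Prop := forall k, Ck k U f.

Definition sqnorm {R : realType} {k : nat} (v : 'rV[R]_k) : R :=
  \sum_(i < k) (v ord0 i) ^+ 2.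
Definition eucl_dist {R : realType} {k : nat} (v w : 'rV[R]_k) : R :=
  Num.sqrt (sqnorm (v - w)).

(* R^{2n} with n = m.+1, as 'rV_(n + n): x_j = first block, y_j = second *)
Definition xc {R : realType} {n : nat} (p : 'rV[R]_(n + n)) (j : 'I_n) : R :=
  p ord0 (lshift n j).
Definition yc {R : realType} {n : nat} (p : 'rV[R]_(n + n)) (j : 'I_n) : R :=
  p ord0 (rshift n j).

Definition alpha {R : realType} {n : nat} (p w : 'rV[R]_(n + n)) : R :=
  \sum_(j < n) (xc p j * yc w j - yc p j * xc w j).

Definition sphere {R : realType} (n : nat) : set 'rV[R]_(n + n) :=
  [set p | sqnorm p = 1].

(* standard contact ball D (n = m.+1), its boundary and south pole *)
Definition stdD {R : realType} (m : nat) : set 'rV[R]_(m.+1 + m.+1) :=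
  [set p | sqnorm p = 1 /\ 0 <= yc p ord_max].
Definition bdD {R : realType} (m : nat) : set 'rV[R]_(m.+1 + m.+1) :=
  [set p | sqnorm p = 1 /\ yc p ord_max = 0].
Definition pole_minus {R : realType} (m : nat) : 'rV[R]_(m.+1 + m.+1) :=
  \row_(i < m.+1 + m.+1) (if i == lshift m.+1 ord_max then -1 else 0).

(* R^{2n-1} = R^{2m} x R as 'rV_((m + m) + 1); u = first block, z = last *)
Definition ucomp {R : realType} {m : nat} (q : 'rV[R]_((m + m) + 1))
  : 'rV[R]_(m + m) := \row_i q ord0 (lshift 1 i).
Definition zc {R : realType} {m : nat} (q : 'rV[R]_((m + m) + 1)) : R :=
  q ord0 (rshift (m + m) ord0).

Definition cylD {R : realType} (m : nat) (a : R) : set 'rV[R]_((m + m) + 1) :=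
  [set q | sqnorm (ucomp q) <= 1 /\ 0 <= zc q <= a].
Definition cyl_top {R : realType} (m : nat) (a : R) : set 'rV[R]_((m + m) + 1) :=
  [set q | sqnorm (ucomp q) <= 1 /\ zc q = a].

Definition beta {R : realType} {m : nat} (q w : 'rV[R]_((m + m) + 1)) : R :=
  alpha (ucomp q) (ucomp w) + zc w.

Definition contact_embedding {R : realType} (m : nat) (a : R)
  (h : 'rV[R]_((m + m) + 1) -> 'rV[R]_(m.+1 + m.+1)) : Prop :=
  [/\ exists U : set 'rV[R]_((m + m) + 1), open U /\ cylD m a `<=` U /\ smooth_on U h,
      {in cylD m a &, injective h},
      (forall q, cylD m a q -> forall w, 'D_w h q = 0 -> w = 0),
      h @` cylD m a `<=` stdD m &
      (forall q, cylD m a q -> forall w,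
          alpha (h q) ('D_w h q) = 0 <-> beta q w = 0)].

From HB Require Import structures.
From mathcomp Require Import all_boot all_order all_algebra.
From mathcomp Require Import all_classical all_reals all_analysis.
From mathcomp Require Import ring lra.
Import Order.TTheory GRing.Theory Num.Theory.
Import numFieldNormedType.Exports.
Local Open Scope classical_set_scope.
Local Open Scope ring_scope.

(* The embedding is a rescaled inverse Cayley transform.  Write w_k = x_k + i y_k on
   the sphere, u_j = x_j + i y_j on the disc and, for c > 0,
     s = c^2 |u|^2 - 2 i c^2 (a - z),
     w_n = (1 - s) / (1 + s),   w_j = - 2 i c conj(u_j) / (1 + s)   (j < n).
   Then |w| = 1, the pullback of the contact form is - 4 c^2 / |1 + s|^2 (lambda_st + dz),
   and Im w_n = 4 c^2 (a - z) / |1 + s|^2 vanishes exactly on the top z = a.  On the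
   sphere minus p_- the map has an explicit inverse (1 + s = 2 / (1 + w_n)).  A point at
   distance >= eps from p_- has Re (1 + w_n) = |p - p_-|^2 / 2 >= eps^2 / 2, so for c
   large enough its preimage lies in the cylinder; the image of the cylinder (resp. of
   its top) therefore misses only an eps-ball around p_- in D (resp. in its boundary).
   The components are rational functions with nowhere-vanishing denominators; they are
   written in a small syntax of rational expressions with a symbolic derivative, which
   gives smoothness and the derivatives needed for the contact and immersion conditions. *)

Section RationalExpressions.
Context {R : realType} {N : nat}.
Local Notation V := 'rV[R]_N.

Inductive rexpr : Type :=
  | RCst of R
  | RVar of 'I_N
  | RAdd of rexpr & rexpr
  | RMul of rexpr & rexpr
  | RInv of rexpr.

Fixpoint reval (e : rexpr) (q : V) : R :=
  match e with
  | RCst r => r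
  | RVar i => q ord0 i
  | RAdd e1 e2 => reval e1 q + reval e2 q
  | RMul e1 e2 => reval e1 q * reval e2 q
  | RInv e1 => (reval e1 q)^-1
  end.

Fixpoint rderive (e : rexpr) (w : V) : rexpr :=
  match e with
  | RCst _ => RCst 0
  | RVar i => RCst (w ord0 i)
  | RAdd e1 e2 => RAdd (rderive e1 w) (rderive e2 w)
  | RMul e1 e2 => RAdd (RMul e1 (rderive e2 w)) (RMul e2 (rderive e1 w))
  | RInv e1 => RMul (RCst (-1)) (RMul (RMul (RInv e1) (RInv e1)) (rderive e1 w))
  end.

Fixpoint rdefined (e : rexpr) : Prop :=
  match e with
  | RCst _ | RVar _ => True
  | RAdd e1 e2 | RMul e1 e2 => rdefined e1 /\ rdefined e2
  | RInv e1 => rdefined e1 /\ forall q, reval e1 q != 0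
  end.

Lemma derive_coord (i : 'I_N) (q w : V) :
  'D_w (fun x : V => x ord0 i) q = w ord0 i.
Proof.
have := derive_mx (@derivable_id _ _ q w); rewrite derive_id => idE.
by rewrite [in RHS]idE mxE.
Qed.

Lemma differentiable_reval e q : rdefined e -> differentiable (reval e) q.
Proof.
elim: e => [r|i|e1 IH1 e2 IH2|e1 IH1 e2 IH2|e1 IH1] /=.
- by move=> _; exact: differentiable_cst.
- by move=> _; exact: differentiable_coord.
- by move=> [d1 d2]; exact: differentiableD (IH1 d1) (IH2 d2).
- by move=> [d1 d2]; exact: differentiableM (IH1 d1) (IH2 d2).
- by move=> [d1 nz]; exact: differentiableV (IH1 d1) (nz q).
Qed.

Lemma derive_reval e q w : rdefined e -> 'D_w (reval e) q = reval (rderive e w) q.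
Proof.
have dv e' : rdefined e' -> derivable (reval e') q w.
  by move=> d; apply: diff_derivable; exact: differentiable_reval.
elim: e => [r|i|e1 IH1 e2 IH2|e1 IH1 e2 IH2|e1 IH1] /=.
- by move=> _; exact: derive_cst.
- by move=> _; exact: derive_coord.
- by move=> [d1 d2]; rewrite (deriveD (dv _ d1) (dv _ d2)) IH1 // IH2.
- by move=> [d1 d2]; rewrite (deriveM (dv _ d1) (dv _ d2)) IH1 // IH2.
- move=> [d1 nz]; rewrite (deriveV (nz q) (dv _ d1)) IH1 //.
  by rewrite -[_ *: _]/(_ * _) expr2 invfM; ring.
Qed.

Lemma rdefined_rderive e w : rdefined e -> rdefined (rderive e w).
Proof.
elim: e => [r|i|e1 IH1 e2 IH2|e1 IH1 e2 IH2|e1 IH1] //=.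
- by move=> [d1 d2]; split; [exact: IH1|exact: IH2].
- by move=> [d1 d2]; do !split => //; [exact: IH2|exact: IH1].
- by move=> [d1 nz]; do !split => //; exact: IH1.
Qed.

Definition rmap {M} (E : 'I_M -> rexpr) (q : V) : 'rV[R]_M := \row_k reval (E k) q.

Section RowMap.
Variables (M : nat) (E : 'I_M -> rexpr).
Hypothesis E_defined : forall k, rdefined (E k).

Lemma differentiable_rmap q : differentiable (rmap E) q.
Proof.
have -> : rmap E = \sum_(k < M) (fun q => reval (E k) q *: (delta_mx 0 k : 'rV[R]_M)).
  rewrite fct_sumE; apply: funext => q'.
  by rewrite [LHS]row_sum_delta; apply: eq_bigr => k _; rewrite mxE.
apply: differentiable_sum => k; apply: differentiableZl.
exact: differentiable_reval.
Qed.

Lemma derive_rmap q w : 'D_w (rmap E) q = rmap (fun k => rderive (E k) w) q.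
Proof.
rewrite (derive_mx (diff_derivable (differentiable_rmap q))).
apply/rowP => k; rewrite !mxE.
have -> : (fun t => rmap E t ord0 k) = reval (E k) by apply: funext => t; rewrite mxE.
exact: derive_reval.
Qed.

End RowMap.

Lemma smooth_rmap M (E : 'I_M -> rexpr) :
  (forall k, rdefined (E k)) -> smooth_on setT (rmap E).
Proof.
move=> + n; elim: n E => [|n IH] E dE /=.
- by move=> q _; apply: differentiable_continuous; exact: differentiable_rmap.
- split=> [q _|v]; first exact: differentiable_rmap.
  have -> : (fun y => 'D_v (rmap E) y) = rmap (fun k => rderive (E k) v).
    by apply: funext => y; exact: derive_rmap.
  by apply: IH => j; exact: rdefined_rderive.
Qed.

End RationalExpressions.

Lemma split_lshift m n (j : 'I_m) : fintype.split (lshift n j) = inl j.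
Proof. exact: (unsplitK (inl j)). Qed.

Lemma split_rshift m n (j : 'I_n) : fintype.split (rshift m j) = inr j.
Proof. exact: (unsplitK (inr j)). Qed.

Lemma unlift_max_widen n (j : 'I_n) : unlift ord_max (widen_ord (leqnSn n) j) = Some j.
Proof.
have -> : widen_ord (leqnSn n) j = lift ord_max j by apply: ord_inj; rewrite lift_max.
exact: liftK.
Qed.

Lemma widen_max_neq n (j : 'I_n) : (widen_ord (leqnSn n) j == ord_max) = false.
Proof. by rewrite -val_eqE /= ltn_eqF. Qed.

Lemma ord_max_ind n (P : 'I_n.+1 -> Prop) :
  (forall j : 'I_n, P (widen_ord (leqnSn n) j)) -> P ord_max -> forall j, P j.
Proof.
move=> Pw Pmax j; case: (unliftP ord_max j) => [j'|] -> //.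
by have -> : lift ord_max j' = widen_ord (leqnSn n) j' by apply: ord_inj; rewrite lift_max.
Qed.

Section Coordinates.
Context {R : realType}.

Lemma sqnorm_ge0 {k} (v : 'rV[R]_k) : 0 <= sqnorm v.
Proof. by apply: sumr_ge0 => i _; exact: sqr_ge0. Qed.

Lemma sqnorm_xy n (p : 'rV[R]_(n + n)) :
  sqnorm p = \sum_(j < n) (xc p j ^+ 2 + yc p j ^+ 2).
Proof. by rewrite /sqnorm big_split_ord big_split. Qed.

Lemma eq_row_xy n (p p' : 'rV[R]_(n + n)) :
  (forall j, xc p j = xc p' j) -> (forall j, yc p j = yc p' j) -> p = p'.
Proof.
move=> eqx eqy; apply/rowP => i; rewrite -(splitK i).
by case: (fintype.split i) => j; [exact: eqx|exact: eqy].
Qed.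

Lemma xcB n (p p' : 'rV[R]_(n + n)) j : xc (p - p') j = xc p j - xc p' j.
Proof. by rewrite /xc !mxE. Qed.

Lemma ycB n (p p' : 'rV[R]_(n + n)) j : yc (p - p') j = yc p j - yc p' j.
Proof. by rewrite /yc !mxE. Qed.

Lemma sqnorm_xy_recr n (p : 'rV[R]_(n.+1 + n.+1)) :
  sqnorm p =
    \sum_(j < n) (xc p (widen_ord (leqnSn n) j) ^+ 2 + yc p (widen_ord (leqnSn n) j) ^+ 2)
    + (xc p ord_max ^+ 2 + yc p ord_max ^+ 2).
Proof. by rewrite sqnorm_xy big_ord_recr. Qed.

End Coordinates.

Section Pole.
Context {R : realType} (m : nat).

Lemma xc_pole_minus j : xc (pole_minus m : 'rV[R]_(m.+1 + m.+1)) j = - (j == ord_max)%:R.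
Proof. by rewrite /xc mxE eq_lshift; case: eqP; rewrite ?oppr0. Qed.

Lemma yc_pole_minus j : yc (pole_minus m : 'rV[R]_(m.+1 + m.+1)) j = 0.
Proof. by rewrite /yc mxE eq_rlshift. Qed.

Lemma bdD_pole_minus : bdD m (pole_minus m : 'rV[R]_(m.+1 + m.+1)).
Proof.
split; last exact: yc_pole_minus.
by rewrite sqnorm_xy_recr big1 => [|j _];
  rewrite xc_pole_minus yc_pole_minus ?widen_max_neq ?eqxx /=; ring.
Qed.

Lemma sqnorm_sub_pole_minus (p : 'rV[R]_(m.+1 + m.+1)) :
  sqnorm p = 1 -> sqnorm (p - pole_minus m) = 2 * (1 + xc p ord_max).
Proof.
rewrite !sqnorm_xy_recr => p_sphere.
under eq_bigr do rewrite xcB ycB xc_pole_minus yc_pole_minus widen_max_neq oppr0 ?subr0 ?addr0.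
rewrite xcB ycB xc_pole_minus yc_pole_minus eqxx /= subr0.
by move/(canRL (addrK _)): p_sphere => ->; ring.
Qed.

End Pole.

Section CayleyMap.
Context {R : realType} {m : nat}.
Variables (a c : R).
Hypothesis c_gt0 : 0 < c.
Let c_neq0 : c != 0. Proof. by rewrite gt_eqF. Qed.
Local Notation N := ((m + m) + 1)%N.
Local Notation V := 'rV[R]_N.
Local Notation rexpr := (@rexpr R N).
Local Notation wid := (widen_ord (leqnSn m)).

Definition ix (j : 'I_m) : 'I_N := lshift 1 (lshift m j).
Definition iy (j : 'I_m) : 'I_N := lshift 1 (rshift m j).
Definition iz : 'I_N := rshift (m + m) ord0.

Definition ux (q : V) j := q ord0 (ix j).
Definition uy (q : V) j := q ord0 (iy j).

Lemma sqnorm_ucomp q : sqnorm (ucomp q) = \sum_(j < m) (ux q j ^+ 2 + uy q j ^+ 2).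
Proof. by rewrite sqnorm_xy; apply: eq_bigr => j _; rewrite /xc /yc !mxE. Qed.

Lemma alpha_ucomp q w :
  alpha (ucomp q) (ucomp w) = \sum_(j < m) (ux q j * uy w j - uy q j * ux w j).
Proof. by apply: eq_bigr => j _; rewrite /xc /yc !mxE. Qed.

Lemma eq_row_cyl (q q' : V) :
  (forall j, ux q j = ux q' j) -> (forall j, uy q j = uy q' j) -> zc q = zc q' -> q = q'.
Proof.
move=> eqx eqy eqz; apply/rowP => i; rewrite -(splitK i).
case: (fintype.split i) => [k|k] /=; last by rewrite (ord1 k).
by rewrite -(splitK k); case: (fintype.split k) => j; [exact: eqx|exact: eqy].
Qed.

(* With s as above: [usqE] = |u|^2, [tE] = - Im s, [vE] = Re s,
   [pE] = Re (1 + s) and [qE] = |1 + s|^2.  [usqE] is locked so that [/=] does not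
   unfold the sum. *)
Definition usqE : rexpr :=
  locked (\big[RAdd/RCst 0]_(i < m + m) RMul (RVar (lshift 1 i)) (RVar (lshift 1 i))).
Definition tE : rexpr := RMul (RCst (2 * c ^+ 2)) (RAdd (RCst a) (RMul (RCst (-1)) (RVar iz))).
Definition vE : rexpr := RMul (RCst (c ^+ 2)) usqE.
Definition pE : rexpr := RAdd (RCst 1) vE.
Definition qE : rexpr := RAdd (RMul tE tE) (RMul pE pE).

Definition xE (j : 'I_m) : rexpr :=
  RMul (RCst 2) (RMul (RAdd (RMul (RMul (RCst c) (RVar (ix j))) tE)
                            (RMul (RMul (RCst (- c)) (RVar (iy j))) pE)) (RInv qE)).
Definition yE (j : 'I_m) : rexpr :=
  RMul (RCst 2) (RMul (RAdd (RMul (RMul (RCst (- c)) (RVar (iy j))) tE)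
                            (RMul (RCst (-1)) (RMul (RMul (RCst c) (RVar (ix j))) pE))) (RInv qE)).
Definition xnE : rexpr :=
  RMul (RAdd (RCst 1) (RMul (RCst (-1)) (RAdd (RMul vE vE) (RMul tE tE)))) (RInv qE).
Definition ynE : rexpr := RMul (RMul (RCst 2) tE) (RInv qE).

Definition sphere_coords {T} (X Y : 'I_m -> T) (Xn Yn : T) (k : 'I_(m.+1 + m.+1)) : T :=
  match fintype.split k with
  | inl j => if unlift ord_max j is Some j' then X j' else Xn
  | inr j => if unlift ord_max j is Some j' then Y j' else Yn
  end.

Definition cayley : V -> 'rV[R]_(m.+1 + m.+1) := rmap (sphere_coords xE yE xnE ynE).

Section RmapCoords.
Variables (X Y : 'I_m -> rexpr) (Xn Yn : rexpr) (q : V).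
Local Notation p := (rmap (sphere_coords X Y Xn Yn) q).

Lemma xc_rmap j : xc p (wid j) = reval (X j) q.
Proof. by rewrite /xc mxE /sphere_coords split_lshift unlift_max_widen. Qed.
Lemma yc_rmap j : yc p (wid j) = reval (Y j) q.
Proof. by rewrite /yc mxE /sphere_coords split_rshift unlift_max_widen. Qed.
Lemma xc_rmap_max : xc p ord_max = reval Xn q.
Proof. by rewrite /xc mxE /sphere_coords split_lshift unlift_none. Qed.
Lemma yc_rmap_max : yc p ord_max = reval Yn q.
Proof. by rewrite /yc mxE /sphere_coords split_rshift unlift_none. Qed.

End RmapCoords.

Lemma reval_usqE q : reval usqE q = sqnorm (ucomp q).
Proof.
rewrite /usqE -lock (big_morph (reval^~ q) (id1 := 0) (op1 := +%R)) //.
by apply: eq_bigr => i _; rewrite /ucomp mxE expr2.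
Qed.

Lemma reval_tE q : reval tE q = 2 * c ^+ 2 * (a - zc q).
Proof. by rewrite /= /zc -/iz mulN1r. Qed.
Lemma reval_vE q : reval vE q = c ^+ 2 * sqnorm (ucomp q).
Proof. by rewrite /= reval_usqE. Qed.
Lemma reval_pE q : reval pE q = 1 + reval vE q.
Proof. by []. Qed.
Lemma reval_qE q : reval qE q = reval tE q ^+ 2 + reval pE q ^+ 2.
Proof. by rewrite /= !expr2. Qed.

Lemma qE_ge1 q : 1 <= reval qE q.
Proof.
rewrite /= reval_usqE.
have := sqnorm_ge0 (ucomp q); have := sqr_ge0 c; set t := _ * (a + _).
nra.
Qed.

Lemma qE_neq0 q : reval qE q != 0.
Proof. by rewrite gt_eqF // (lt_le_trans ltr01 (qE_ge1 q)). Qed.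

Lemma rdefined_coords k : rdefined (sphere_coords xE yE xnE ynE k).
Proof.
have usq_def : rdefined usqE by rewrite /usqE -lock; elim/big_ind: _ => //= i _.
rewrite /sphere_coords; case: (fintype.split k) => j; case: (unlift _ j) => [j'|];
  do !split => //; exact: qE_neq0.
Qed.

Lemma derive_cayley q w :
  'D_w cayley q = rmap (sphere_coords (fun j => rderive (xE j) w) (fun j => rderive (yE j) w)
                                      (rderive xnE w) (rderive ynE w)) q.
Proof.
rewrite derive_rmap; last exact: rdefined_coords.
by congr rmap; apply: funext => k; rewrite /sphere_coords; case: fintype.split => j; case: unlift.
Qed.

Lemma alpha_summand q w j :
  reval (xE j) q * reval (rderive (yE j) w) q - reval (yE j) q * reval (rderive (xE j) w) q =
  -4 * c ^+ 2 / reval qE q * (ux q j * uy w j - uy q j * ux w j)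
  - 4 * c ^+ 2 * (ux q j ^+ 2 + uy q j ^+ 2)
    * (reval tE q * reval (rderive vE w) q - reval pE q * reval (rderive tE w) q)
    / reval qE q ^+ 2.
Proof. by have := qE_neq0 q; rewrite /ux /uy /= => ?; field. Qed.

Lemma alpha_summand_last q w :
  reval xnE q * reval (rderive ynE w) q - reval ynE q * reval (rderive xnE w) q =
  2 * reval (rderive tE w) q / reval qE q
  + 4 * reval vE q
    * (reval tE q * reval (rderive vE w) q - reval pE q * reval (rderive tE w) q)
    / reval qE q ^+ 2.
Proof. by have := qE_neq0 q; rewrite /= => ?; field. Qed.

Lemma cayley_contact q w :
  alpha (cayley q) ('D_w cayley q) = -4 * c ^+ 2 / reval qE q * beta q w.
Proof.
rewrite derive_cayley /alpha big_ord_recr !xc_rmap_max !yc_rmap_max alpha_summand_last.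
under eq_bigr => j _ do rewrite !xc_rmap !yc_rmap alpha_summand.
rewrite big_split sumrN -mulr_sumr -!mulr_suml -mulr_sumr -sqnorm_ucomp -alpha_ucomp.
rewrite /beta /zc -/iz [reval vE q]/= reval_usqE.
by have := qE_neq0 q; rewrite /= reval_usqE => ?; field.
Qed.

Lemma derive_tE q w : reval (rderive tE w) q = - 2 * c ^+ 2 * zc w.
Proof. by rewrite /= /zc -/iz; ring. Qed.

Lemma derive_vE q w : reval (rderive vE w) q = c ^+ 2 * reval (rderive usqE w) q.
Proof. by rewrite /=; ring. Qed.

Lemma derive_tv_from_last q w :
  reval (rderive tE w) q =
    - ((reval tE q ^+ 2 - reval pE q ^+ 2) * reval (rderive ynE w) q
       + 2 * reval tE q * reval pE q * reval (rderive xnE w) q) / 2 /\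
  reval (rderive vE w) q =
    ((reval tE q ^+ 2 - reval pE q ^+ 2) * reval (rderive xnE w) q
     - 2 * reval tE q * reval pE q * reval (rderive ynE w) q) / 2.
Proof. by have := qE_neq0 q; rewrite /= => ?; split; field. Qed.

Lemma derive_u_from_pair q w j :
  reval (rderive usqE w) q = 0 -> zc w = 0 ->
  2 * c * ux w j =
    reval tE q * reval (rderive (xE j) w) q - reval pE q * reval (rderive (yE j) w) q /\
  2 * c * uy w j =
    - reval tE q * reval (rderive (yE j) w) q - reval pE q * reval (rderive (xE j) w) q.
Proof.
rewrite /zc -/iz => du dz; have := qE_neq0 q.
by rewrite /= /ux /uy du dz => ?; split; field.
Qed.

Lemma cayley_immersion q w : 'D_w cayley q = 0 -> w = 0.
Proof.
rewrite derive_cayley => /rowP Dw0.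
set E := sphere_coords _ _ _ _ in Dw0.
have Dk k : reval (E k) q = 0 by have := Dw0 k; rewrite !mxE.
have dx j : reval (rderive (xE j) w) q = 0.
  by have := Dk (lshift _ (wid j)); rewrite /E /sphere_coords split_lshift unlift_max_widen.
have dy j : reval (rderive (yE j) w) q = 0.
  by have := Dk (rshift _ (wid j)); rewrite /E /sphere_coords split_rshift unlift_max_widen.
have dxn := Dk (lshift _ ord_max); have dyn := Dk (rshift _ ord_max).
rewrite /E /sphere_coords split_lshift split_rshift unlift_none in dxn dyn.
have [dt dv] := derive_tv_from_last q w.
rewrite dxn dyn !mulr0 addr0 subr0 oppr0 !mul0r in dt dv.
have dz : zc w = 0.
  apply: (mulfI (_ : - 2 * c ^+ 2 != 0)); first by rewrite mulf_neq0 ?oppr_eq0 ?expf_neq0.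
  by rewrite -(derive_tE q) dt mulr0.
have du : reval (rderive usqE w) q = 0.
  by apply: (mulfI (_ : c ^+ 2 != 0)); rewrite ?expf_neq0 // -(derive_vE q) dv mulr0.
have two_c : 2 * c != 0 by rewrite mulf_neq0 ?pnatr_eq0.
apply: eq_row_cyl => [j|j|]; rewrite ?/zc /ux /uy mxE.
- apply: (mulfI two_c); have [-> _] := derive_u_from_pair q w j du dz.
  by rewrite dx dy !mulr0 subr0.
- apply: (mulfI two_c); have [_ ->] := derive_u_from_pair q w j du dz.
  by rewrite dx dy !mulr0 subr0.
- by move: dz; rewrite /zc.
Qed.

Lemma xc_cayley q j : xc (cayley q) (wid j) =
  2 * c * (ux q j * reval tE q - uy q j * reval pE q) / reval qE q.
Proof. by have := qE_neq0 q; rewrite xc_rmap /= /ux /uy => ?; field. Qed.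
Lemma yc_cayley q j : yc (cayley q) (wid j) =
  - 2 * c * (uy q j * reval tE q + ux q j * reval pE q) / reval qE q.
Proof. by have := qE_neq0 q; rewrite yc_rmap /= /ux /uy => ?; field. Qed.
Lemma xc_cayley_max q : xc (cayley q) ord_max =
  (1 - reval vE q ^+ 2 - reval tE q ^+ 2) / reval qE q.
Proof. by have := qE_neq0 q; rewrite xc_rmap_max /= => ?; field. Qed.
Lemma yc_cayley_max q : yc (cayley q) ord_max = 2 * reval tE q / reval qE q.
Proof. by have := qE_neq0 q; rewrite yc_rmap_max /= => ?; field. Qed.

Lemma cayley_sqnorm q : sqnorm (cayley q) = 1.
Proof.
have pairE j : xc (cayley q) (wid j) ^+ 2 + yc (cayley q) (wid j) ^+ 2 =
               4 * c ^+ 2 / reval qE q * (ux q j ^+ 2 + uy q j ^+ 2).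
  by have := qE_neq0 q; rewrite xc_cayley yc_cayley reval_qE => ?; field.
rewrite sqnorm_xy_recr; under eq_bigr do rewrite pairE.
rewrite -mulr_sumr -sqnorm_ucomp xc_cayley_max yc_cayley_max.
by have := qE_neq0 q; rewrite reval_qE reval_pE !reval_vE => ?; field.
Qed.

Lemma cayley_yc_max_ge0 q : zc q <= a -> 0 <= yc (cayley q) ord_max.
Proof.
move=> le_za; rewrite yc_cayley_max reval_tE divr_ge0 ?(le_trans ler01 (qE_ge1 q)) //.
by have := sqr_ge0 c; nra.
Qed.

Lemma cayley_yc_max_top q : zc q = a -> yc (cayley q) ord_max = 0.
Proof. by move=> eq_za; rewrite yc_cayley_max reval_tE eq_za subrr !mulr0 mul0r. Qed.

Definition re_1w (p : 'rV[R]_(m.+1 + m.+1)) : R := 1 + xc p ord_max.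
Definition norm2_1w (p : 'rV[R]_(m.+1 + m.+1)) : R := re_1w p ^+ 2 + yc p ord_max ^+ 2.

Definition cayley_inv (p : 'rV[R]_(m.+1 + m.+1)) : V :=
  \row_i match fintype.split i with
    | inl k => match fintype.split k with
      | inl j => (xc p (wid j) * yc p ord_max - yc p (wid j) * re_1w p) / (norm2_1w p * c)
      | inr j => - (xc p (wid j) * re_1w p + yc p (wid j) * yc p ord_max) / (norm2_1w p * c)
      end
    | inr _ => a - yc p ord_max / (norm2_1w p * c ^+ 2)
    end.

Lemma ux_cayley_inv p j :
  ux (cayley_inv p) j = (xc p (wid j) * yc p ord_max - yc p (wid j) * re_1w p) / (norm2_1w p * c).
Proof. by rewrite /ux mxE /ix !split_lshift. Qed.
Lemma uy_cayley_inv p j :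
  uy (cayley_inv p) j = - (xc p (wid j) * re_1w p + yc p (wid j) * yc p ord_max) / (norm2_1w p * c).
Proof. by rewrite /uy mxE /iy split_lshift split_rshift. Qed.
Lemma zc_cayley_inv p : zc (cayley_inv p) = a - yc p ord_max / (norm2_1w p * c ^+ 2).
Proof. by rewrite /zc mxE split_rshift. Qed.

Lemma re_1w_cayley q : re_1w (cayley q) = 2 * reval pE q / reval qE q.
Proof.
by have := qE_neq0 q; rewrite /re_1w xc_cayley_max reval_qE reval_pE => ?; field.
Qed.

Lemma norm2_1w_cayley q : norm2_1w (cayley q) = 4 / reval qE q.
Proof.
by have := qE_neq0 q; rewrite /norm2_1w re_1w_cayley yc_cayley_max reval_qE => ?; field.
Qed.

Lemma cayley_invK q : cayley_inv (cayley q) = q.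
Proof.
have Q_neq0 : reval tE q ^+ 2 + reval pE q ^+ 2 != 0 by rewrite -reval_qE qE_neq0.
apply: eq_row_cyl => [j|j|].
- rewrite ux_cayley_inv re_1w_cayley norm2_1w_cayley xc_cayley yc_cayley yc_cayley_max.
  by rewrite reval_qE; field; rewrite Q_neq0 c_neq0.
- rewrite uy_cayley_inv re_1w_cayley norm2_1w_cayley xc_cayley yc_cayley yc_cayley_max.
  by rewrite reval_qE; field; rewrite Q_neq0 c_neq0.
- rewrite zc_cayley_inv norm2_1w_cayley yc_cayley_max reval_qE reval_tE.
  by move: Q_neq0; rewrite reval_tE => Q_neq0; field; rewrite Q_neq0 c_neq0.
Qed.

Section RightInverse.
Variable p : 'rV[R]_(m.+1 + m.+1).
Hypothesis p_sphere : sqnorm p = 1.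
Hypothesis re_1w_gt0 : 0 < re_1w p.

Lemma norm2_1w_gt0 : 0 < norm2_1w p.
Proof. by rewrite ltr_wpDr ?sqr_ge0 ?exprn_gt0. Qed.

Let D_neq0 : (1 + xc p ord_max) ^+ 2 + yc p ord_max ^+ 2 != 0.
Proof. by rewrite gt_eqF ?norm2_1w_gt0. Qed.

Lemma vE_cayley_inv : reval vE (cayley_inv p) = 2 * re_1w p / norm2_1w p - 1.
Proof.
have pairE j : ux (cayley_inv p) j ^+ 2 + uy (cayley_inv p) j ^+ 2 =
               (xc p (wid j) ^+ 2 + yc p (wid j) ^+ 2) / (norm2_1w p * c ^+ 2).
  rewrite ux_cayley_inv uy_cayley_inv /norm2_1w /re_1w.
  by field; rewrite D_neq0 c_neq0.
have sumE : \sum_(j < m) (xc p (wid j) ^+ 2 + yc p (wid j) ^+ 2) =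
            1 - xc p ord_max ^+ 2 - yc p ord_max ^+ 2.
  by rewrite -p_sphere sqnorm_xy_recr; ring.
rewrite reval_vE sqnorm_ucomp; under eq_bigr do rewrite pairE.
rewrite -mulr_suml sumE /norm2_1w /re_1w.
by field; rewrite D_neq0 c_neq0.
Qed.

Lemma tE_cayley_inv : reval tE (cayley_inv p) = 2 * yc p ord_max / norm2_1w p.
Proof. by rewrite reval_tE zc_cayley_inv /norm2_1w /re_1w; field; rewrite D_neq0 c_neq0. Qed.

Lemma qE_cayley_inv : reval qE (cayley_inv p) = 4 / norm2_1w p.
Proof.
rewrite reval_qE reval_pE vE_cayley_inv tE_cayley_inv /norm2_1w /re_1w.
by field.
Qed.

Lemma cayley_invKV : cayley (cayley_inv p) = p.
Proof.
apply: eq_row_xy; apply: ord_max_ind => [j|];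
  rewrite ?xc_cayley ?yc_cayley ?xc_cayley_max ?yc_cayley_max ?ux_cayley_inv ?uy_cayley_inv
          ?reval_pE ?vE_cayley_inv tE_cayley_inv qE_cayley_inv /norm2_1w /re_1w.
all: by field; rewrite ?D_neq0 ?c_neq0.
Qed.

End RightInverse.

Section Covering.
Context {eps : R} {p : 'rV[R]_(m.+1 + m.+1)}.
Hypotheses (a_gt0 : 0 < a) (eps_gt0 : 0 < eps).
Hypotheses (c_eps : 4 / eps ^+ 2 <= c ^+ 2) (c_a : 4 / (a * eps ^+ 4) <= c ^+ 2).
Hypotheses (p_sphere : sqnorm p = 1) (yn_ge0 : 0 <= yc p ord_max).
Hypothesis p_far : eps <= eucl_dist p (pole_minus m).

Local Notation d := (re_1w p).
Local Notation D := (norm2_1w p).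

Let eps_d : eps ^+ 2 <= 2 * d.
Proof.
move: p_far; rewrite /eucl_dist sqnorm_sub_pole_minus // => far.
have d_ge0 : 0 <= 2 * d by rewrite -sqnorm_sub_pole_minus ?sqnorm_ge0.
by rewrite -ler_sqrt // sqrtr_sqr (ger0_norm (ltW eps_gt0)).
Qed.

Let d_gt0 : 0 < d.
Proof. by have := exprn_gt0 2 eps_gt0; have := eps_d; lra. Qed.

Let D_gt0 : 0 < D. Proof. exact: norm2_1w_gt0. Qed.

Lemma cayley_inv_usq_le1 : sqnorm (ucomp (cayley_inv p)) <= 1.
Proof.
have dD : 2 * d / D <= 2 / d.
  rewrite -subr_ge0 (_ : _ - _ = 2 * yc p ord_max ^+ 2 / (d * D)).
    by rewrite divr_ge0 ?mulr_ge0 ?sqr_ge0 // ltW.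
  by move: D_gt0; rewrite /norm2_1w => /gt_eqF D_neq0; field; rewrite D_neq0 gt_eqF.
have d_eps : 2 / d <= 4 / eps ^+ 2.
  by rewrite ler_pdivrMr // mulrAC ler_pdivlMr ?exprn_gt0 //; have := eps_d; lra.
have : c ^+ 2 * sqnorm (ucomp (cayley_inv p)) <= c ^+ 2 * 1.
  rewrite -reval_vE vE_cayley_inv // mulr1 lerBlDr.
  by apply: le_trans (le_trans dD (le_trans d_eps c_eps)) _; rewrite lerDl.
by rewrite ler_pM2l ?exprn_gt0.
Qed.

Lemma cayley_inv_zc_ge0 : 0 <= zc (cayley_inv p).
Proof.
have yn_le1 : yc p ord_max <= 1.
  move: p_sphere; rewrite sqnorm_xy_recr.
  have : 0 <= \sum_(j < m) (xc p (wid j) ^+ 2 + yc p (wid j) ^+ 2).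
    by apply: sumr_ge0 => j _; rewrite addr_ge0 ?sqr_ge0.
  by have := sqr_ge0 (xc p ord_max); nra.
have D_ge : eps ^+ 4 / 4 <= D.
  by rewrite /norm2_1w; have := sqr_ge0 (yc p ord_max); have := eps_d; nra.
have : 1 <= a * (D * c ^+ 2).
  have <- : a * (eps ^+ 4 / 4 * (4 / (a * eps ^+ 4))) = 1.
    by field; rewrite gt_eqF ?exprn_gt0 // gt_eqF.
  rewrite ler_pM2l // ler_pM // ?divr_ge0 ?mulr_ge0 ?exprn_ge0 // ltW //.
by rewrite zc_cayley_inv subr_ge0 ler_pdivrMr ?mulr_gt0 ?exprn_gt0 //; lra.
Qed.

Lemma cayley_far_in_image : (cayley @` cylD m a) p.
Proof.
exists (cayley_inv p); last exact: cayley_invKV.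
split; first exact: cayley_inv_usq_le1.
rewrite cayley_inv_zc_ge0 zc_cayley_inv gerDl oppr_le0.
by rewrite divr_ge0 ?mulr_ge0 ?sqr_ge0 // ltW.
Qed.

Lemma cayley_far_in_top_image : yc p ord_max = 0 -> (cayley @` cyl_top m a) p.
Proof.
move=> yn0; exists (cayley_inv p); last exact: cayley_invKV.
by split; [exact: cayley_inv_usq_le1 | rewrite zc_cayley_inv yn0 mul0r subr0].
Qed.

End Covering.

Lemma cayley_contact_embedding : contact_embedding m a cayley.
Proof.
split.
- exists setT; split; first exact: openT.
  by split=> //; apply: smooth_rmap; exact: rdefined_coords.
- by move=> q1 q2 _ _ eq_h; rewrite -(cayley_invK q1) eq_h cayley_invK.
- by move=> q _ w; exact: cayley_immersion.
- move=> _ [q [_ /andP[_ le_za]] <-].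
  by split; [exact: cayley_sqnorm | exact: cayley_yc_max_ge0].
- move=> q _ w; rewrite cayley_contact; split=> [/eqP|->]; last by rewrite mulr0.
  rewrite mulf_eq0 => /orP[|/eqP //].
  by rewrite !mulf_eq0 invr_eq0 (negbTE (qE_neq0 q)) (gt_eqF c_gt0) oppr_eq0 pnatr_eq0.
Qed.

Lemma cayley_top_bdD : cayley @` cyl_top m a `<=` bdD m.
Proof.
move=> _ [q [_ eq_za] <-].
by split; [exact: cayley_sqnorm | exact: cayley_yc_max_top].
Qed.

End CayleyMap.

Theorem lemma7p5 (R : realType) (m : nat) (a : R) (ha : 0 < a) :
  forall eps : R, 0 < eps ->
  exists h : 'rV[R]_((m + m) + 1) -> 'rV[R]_(m.+1 + m.+1),
    [/\ contact_embedding m a h,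
        h @` cyl_top m a `<=` bdD m,
        (forall p, bdD m p -> ~ (h @` cyl_top m a) p -> eucl_dist p (pole_minus m) < eps) &
        (forall p, stdD m p -> ~ (h @` cylD m a) p ->
           exists2 b, bdD m b & eucl_dist p b < eps)].
Proof.
move=> eps eps_gt0.
pose c : R := 1 + 4 / eps ^+ 2 + 4 / (a * eps ^+ 4).
have eps_term_ge0 : 0 <= 4 / eps ^+ 2 by rewrite divr_ge0 ?exprn_ge0 ?ltW.
have a_term_ge0 : 0 <= 4 / (a * eps ^+ 4) by rewrite divr_ge0 ?mulr_ge0 ?exprn_ge0 ?ltW.
have c_ge1 : 1 <= c by rewrite /c; lra.
have c_gt0 : 0 < c by lra.
have c_le_sqr : c <= c ^+ 2 by rewrite expr2 ler_peMl // ltW.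
have c_eps : 4 / eps ^+ 2 <= c ^+ 2 by rewrite /c in c_le_sqr *; lra.
have c_a : 4 / (a * eps ^+ 4) <= c ^+ 2 by rewrite /c in c_le_sqr *; lra.
exists (cayley a c); split.
- exact: cayley_contact_embedding.
- exact: cayley_top_bdD.
- move=> p [p_sphere yn0] not_img; rewrite ltNge; apply/negP => far; apply: not_img.
  have yn_ge0 : 0 <= yc p ord_max by rewrite yn0.
  exact: (cayley_far_in_top_image a c c_gt0 eps_gt0 c_eps p_sphere yn_ge0 far yn0).
- move=> p [p_sphere yn_ge0] not_img.
  have [near|far] := ltP (eucl_dist p (pole_minus m)) eps.
    by exists (pole_minus m) => //; exact: bdD_pole_minus.
  case: not_img.
  exact: (cayley_far_in_image a c c_gt0 ha eps_gt0 c_eps c_a p_sphere yn_ge0 far).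
Qed.
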